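(* Let $\mathbb{T}^2=(\mathbb{R}/2\pi\mathbb{Z})^2$, let $\varphi:\mathbb{T}^2\to\mathbb{R}$ be nontrivial and real-analytic, and let $w:\mathbb{T}^2\times\mathbb{T}^2\to\mathbb{R}$ be real-analytic with a unique non-degenerate minimum at $(0,0)$. Let $p\in U_\delta(0)$ with $\varphi(q_0(p))=0$. Then for the coefficients $\hat\alpha_1(p)$ and $\hat c_1(p)$ of the expansion described in the context, $|\hat\alpha_1(p)|+|\hat c_1(p)|\neq0$.
   Context: For $p\in\mathbb{T}^2$ write $w_p(q)=w(p,q)$. There is a neighborhood $U_\delta(0)\subset\mathbb{T}^2$ of $0$ and an analytic map $q_0:U_\delta(0)\to\mathbb{T}^2$ such that $q_0(p)$ is the unique non-degenerate minimum point of $w_p$; $m(p)=\min_q w_p(q)$, $M(p)=\max_q w_p(q)$. Let $\Omega(p;z)=\int_{\mathbb{T}^2}\frac{\varphi^2(s)\,ds}{w_p(s)-z}$ and, for $\mu>0$, $\Delta(\mu,p;z)=1-\mu\Omega(p;z)$. When $\varphi(q_0(p))=0$, set $\mu(p)=\left(\int_{\mathbb{T}^2}\frac{\varphi^2(s)ds}{w_p(s)-m(p)}\right)^{-1}>0$. In this case, for sufficiently small $m(p)-z>0$, one has the convergent expansion $\Delta(\mu,p;z)=1-\frac{\mu}{\mu(p)}-\mu\ln(m(p)-z)\sum_{n\ge1}\hat\alpha_n(p)(m(p)-z)^n-\mu\sum_{n\ge1}\hat c_n(p)(m(p)-z)^n$ with real coefficients $\hat\alpha_n(p),\hat c_n(p)$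 (independent of $\mu$), where $\ln$ is real for $m(p)-z>0$. *)

From Stdlib Require Import Reals Lra ZArith.
From Coquelicot Require Import Coquelicot.
Open Scope R_scope.

(** Points of R^n are represented as [nat -> R] (only coordinates < n matter);
    multi-indices as [nat -> nat]. *)
Definition pt := nat -> R.

Definition upd (x : pt) (i : nat) (t : R) : pt :=
  fun j => if Nat.eqb j i then t else x j.

Definition icons (i : nat) (k : nat -> nat) : nat -> nat :=
  fun j => match j with O => i | S j' => k j' end.

Fixpoint msum (n : nat) (F : (nat -> nat) -> R) : R :=
  match n with
  | O => F (fun _ => O)
  | S n' => Series (fun i => msum n' (fun k => F (icons i k)))
  end.

Fixpoint mabs_summable (n : nat) (F : (nat -> nat) -> R) : Prop :=
  match n with
  | O => True
  | S n' => (forall i, mabs_summable n' (fun k => F (icons i k))) /\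
            ex_series (fun i => msum n' (fun k => Rabs (F (icons i k))))
  end.

Fixpoint mono (n : nat) (k : nat -> nat) (h : pt) : R :=
  match n with
  | O => 1
  | S n' => h O ^ k O * mono n' (fun j => k (S j)) (fun j => h (S j))
  end.

Definition analytic (n : nat) (f : pt -> R) : Prop :=
  forall x : pt, exists r : R, 0 < r /\
    exists a : (nat -> nat) -> R,
      forall h : pt, (forall j, (j < n)%nat -> Rabs (h j) < r) ->
        mabs_summable n (fun k => a k * mono n k h) /\
        f (fun j => x j + h j) = msum n (fun k => a k * mono n k h).

Definition pt2 (a b : R) : pt :=
  fun j => match j with O => a | 1%nat => b | _ => 0 end.
Definition pt4 (a b c d : R) : pt :=
  fun j => match j with O => a | 1%nat => b | 2%nat => c | 3%nat => d | _ => 0 end.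

Definition partial (i : nat) (f : pt -> R) (x : pt) : R :=
  Derive (fun t => f (upd x i t)) (x i).
Definition hessian (f : pt -> R) (x : pt) (i j : nat) : R :=
  partial i (partial j f) x.

Fixpoint fsum (n : nat) (g : nat -> R) : R :=
  match n with O => 0 | S n' => fsum n' g + g n' end.

Definition nondeg_hessian (n : nat) (f : pt -> R) (x : pt) : Prop :=
  forall v : pt,
    (forall i, (i < n)%nat -> fsum n (fun j => hessian f x i j * v j) = 0) ->
    forall j, (j < n)%nat -> v j = 0.

(** Congruence modulo 2*pi (equality on the circle R/2piZ). *)
Definition eq2pi (a b : R) : Prop := exists k : Z, a - b = 2 * PI * IZR k.

Definition periodic2 (f : R -> R -> R) : Prop :=
  forall a b, f (a + 2 * PI) b = f a b /\ f a (b + 2 * PI) = f a b.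
Definition periodic4 (f : R -> R -> R -> R -> R) : Prop :=
  forall a b c d,
    f (a + 2 * PI) b c d = f a b c d /\ f a (b + 2 * PI) c d = f a b c d /\
    f a b (c + 2 * PI) d = f a b c d /\ f a b c (d + 2 * PI) = f a b c d.

Definition wp (w : R -> R -> R -> R -> R) (p1 p2 : R) : pt -> R :=
  fun x => w p1 p2 (x O) (x 1%nat).

Definition unique_nondeg_min_wp (w : R -> R -> R -> R -> R) (p1 p2 q1 q2 : R) : Prop :=
  (forall s1 s2, w p1 p2 q1 q2 <= w p1 p2 s1 s2) /\
  (forall s1 s2, w p1 p2 s1 s2 = w p1 p2 q1 q2 -> eq2pi s1 q1 /\ eq2pi s2 q2) /\
  nondeg_hessian 2 (wp w p1 p2) (pt2 q1 q2).

Definition Omega (phi : R -> R -> R) (w : R -> R -> R -> R -> R) (p1 p2 z : R) : R :=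
  RInt (fun s1 => RInt (fun s2 => (phi s1 s2) ^ 2 / (w p1 p2 s1 s2 - z)) 0 (2 * PI))
       0 (2 * PI).

Definition DeltaF phi w (mu p1 p2 z : R) : R := 1 - mu * Omega phi w p1 p2 z.

From Stdlib Require Import Reals ZArith Lra Lia FunctionalExtensionality.
From Coquelicot Require Import Coquelicot.
Open Scope R_scope.

(* Suppose alpha_1 = c_1 = 0.  Then the expansion gives
   Omega(p; m - t) - Omega(p; m) = ln t * O(t^2) + O(t^2) = O(t^(3/2)) as t -> 0+.
   On the other hand the t-derivative of the integrand phi^2 / (w_p - m + t) is
   -phi^2 / (w_p - m + t)^2 <= -phi^2 / (w_p - m + 1)^2 for t <= 1, whose integral is
   a negative constant because phi is continuous and does not vanish identically on the
   torus.  So Omega(p; m - t) decreases at least linearly in t, contradicting the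
   t^(3/2) bound.  Only the continuity of phi and w_p and the inequality w_p >= m are
   needed: delta = 1 works, and Omega(p; m) enters only as a constant, so it does not
   matter that the integral defining it may diverge. *)

Lemma Rabs_mono_le n : forall k h rho, (forall j, (j < n)%nat -> Rabs (h j) <= rho j) ->
  Rabs (mono n k h) <= mono n k rho.
Proof.
  induction n as [|n IH]; intros k h rho H; simpl.
  - rewrite Rabs_R1; lra.
  - rewrite Rabs_mult, <- RPow_abs. apply Rmult_le_compat.
    + apply pow_le, Rabs_pos.
    + apply Rabs_pos.
    + apply pow_incr. split; [apply Rabs_pos | apply H; lia].
    + apply IH. intros j Hj. apply H. lia.
Qed.

Lemma mono_nonneg n k rho : (forall j, (j < n)%nat -> 0 <= rho j) -> 0 <= mono n k rho.
Proof.
  intros H. eapply Rle_trans; [apply Rabs_pos | apply Rabs_mono_le].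
  intros j Hj. rewrite Rabs_pos_eq; [apply Rle_refl | now apply H].
Qed.

(* Only monomials with [k 0 = 0] survive at [h = 0]; the others carry a factor [h 0]. *)
Lemma Rabs_mono_sub_mono0_le n : forall k h rho dl, 0 <= dl <= 1 ->
  (forall j, (j < n)%nat -> 0 <= rho j) ->
  (forall j, (j < n)%nat -> Rabs (h j) <= dl * rho j) ->
  Rabs (mono n k h - mono n k (fun _ => 0)) <= dl * mono n k rho.
Proof.
  induction n as [|n IH]; intros k h rho dl Hdl Hrho H; simpl.
  - rewrite Rminus_eq_0, Rabs_R0; lra.
  - destruct (k O) as [|k0]; simpl.
    + rewrite !Rmult_1_l. apply IH; [exact Hdl | |]; intros j Hj; [apply Hrho | apply H]; lia.
    + rewrite !Rmult_0_l, Rminus_0_r, !Rabs_mult, <- RPow_abs.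
      set (m := mono n (fun j => k (S j)) (fun j => rho (S j))).
      assert (Hr0 : 0 <= rho O) by (apply Hrho; lia).
      assert (H0 : Rabs (h O) <= dl * rho O) by (apply H; lia).
      assert (Hpow : Rabs (h O) ^ k0 <= rho O ^ k0)
        by (apply pow_incr; split; [apply Rabs_pos | nra]).
      assert (Hm : Rabs (mono n (fun j => k (S j)) (fun j => h (S j))) <= m).
      { apply Rabs_mono_le. intros j Hj.
        assert (0 <= rho (S j)) by (apply Hrho; lia).
        specialize (H (S j) ltac:(lia)). nra. }
      replace (dl * (rho O * rho O ^ k0 * m)) with ((dl * rho O) * (rho O ^ k0 * m)) by ring.
      rewrite Rmult_assoc.
      assert (0 <= Rabs (h O) ^ k0) by apply pow_le, Rabs_pos.
      pose proof (Rabs_pos (h O)).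
      pose proof (Rabs_pos (mono n (fun j => k (S j)) (fun j => h (S j)))).
      apply Rmult_le_compat; [lra | nra | exact H0 | now apply Rmult_le_compat].
Qed.

Lemma ex_series_Rabs_le (a b : nat -> R) :
  (forall n, Rabs (a n) <= b n) -> ex_series b -> ex_series a.
Proof. exact (@ex_series_le R_AbsRing R_CompleteNormedModule a b). Qed.

Lemma Series_nonneg (a : nat -> R) : (forall n, 0 <= a n) -> ex_series a -> 0 <= Series a.
Proof.
  intros Ha Hex. rewrite <- (Rmult_0_l (Series a)), <- Series_scal_l.
  apply Series_le; [| exact Hex]. intros n. specialize (Ha n). lra.
Qed.

Lemma msum_dominated n : forall G D c, 0 <= c -> mabs_summable n G ->
  (forall k, Rabs (D k) <= c * Rabs (G k)) ->
  mabs_summable n D /\ 0 <= msum n (fun k => Rabs (D k)) /\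
  msum n (fun k => Rabs (D k)) <= c * msum n (fun k => Rabs (G k)) /\
  Rabs (msum n D) <= msum n (fun k => Rabs (D k)).
Proof.
  induction n as [|n IH]; intros G D c Hc HG HD; simpl.
  - repeat split; [apply Rabs_pos | apply HD | lra].
  - destruct HG as [HGi HGs].
    assert (IHi : forall i,
      mabs_summable n (fun k => D (icons i k)) /\
      0 <= msum n (fun k => Rabs (D (icons i k))) /\
      msum n (fun k => Rabs (D (icons i k))) <= c * msum n (fun k => Rabs (G (icons i k))) /\
      Rabs (msum n (fun k => D (icons i k))) <= msum n (fun k => Rabs (D (icons i k)))).
    { intros i. apply (IH (fun k => G (icons i k))); [exact Hc | apply HGi | intros; apply HD]. }
    assert (Habs : ex_series (fun i => msum n (fun k => Rabs (D (icons i k))))).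
    { apply (ex_series_Rabs_le _ (fun i => c * msum n (fun k => Rabs (G (icons i k))))).
      - intros i. destruct (IHi i) as (_ & H0 & H1 & _). rewrite Rabs_pos_eq; lra.
      - exact (ex_series_scal_l c _ HGs). }
    assert (Habs2 : ex_series (fun i => Rabs (msum n (fun k => D (icons i k))))).
    { refine (ex_series_Rabs_le _ _ _ Habs).
      intros i. rewrite Rabs_Rabsolu. apply (IHi i). }
    split; [split; [intros i; apply (IHi i) | exact Habs] |].
    split; [apply Series_nonneg; [intros i; apply (IHi i) | exact Habs] |].
    split.
    + rewrite <- Series_scal_l. apply Series_le; [| exact (ex_series_scal_l c _ HGs)].
      intros i; split; apply (IHi i).
    + eapply Rle_trans; [apply Series_Rabs, Habs2 |].
      apply Series_le; [| exact Habs]. intros i; split; [apply Rabs_pos | apply (IHi i)].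
Qed.

Lemma ex_series_msum n F : mabs_summable (S n) F ->
  ex_series (fun i => msum n (fun k => F (icons i k))).
Proof.
  intros [Hi Hs]. apply ex_series_Rabs.
  refine (ex_series_Rabs_le _ _ _ Hs).
  intros i. rewrite Rabs_Rabsolu.
  apply (msum_dominated n (fun k => F (icons i k)) _ 1); [lra | apply Hi | intros; lra].
Qed.

Lemma msum_minus n : forall F G, mabs_summable n F -> mabs_summable n G ->
  msum n (fun k => F k - G k) = msum n F - msum n G.
Proof.
  induction n as [|n IH]; intros F G HF HG; [reflexivity |].
  simpl. rewrite <- Series_minus by (apply ex_series_msum; assumption).
  apply Series_ext. intros i. apply IH; [apply HF | apply HG].
Qed.

(* For [|h j| <= dl * r/2], the series of [f (x + h) - f x] is dominated by [dl] times the
   absolutely convergent series of [|a k| (r/2)^k]. *)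
Lemma analytic_continuous n f : analytic n f -> forall x e, 0 < e -> exists d, 0 < d /\
  forall y, (forall j, (j < n)%nat -> Rabs (y j - x j) < d) -> Rabs (f y - f x) < e.
Proof.
  intros Hf x e He. destruct (Hf x) as (r & Hr & a & Ha).
  set (rho := fun _ : nat => r / 2).
  assert (Hrho : forall j, (j < n)%nat -> 0 <= rho j) by (intros; unfold rho; lra).
  destruct (Ha rho) as [HG _]. { intros j _. unfold rho. rewrite Rabs_pos_eq; lra. }
  destruct (Ha (fun _ => 0)) as [H0s H0e]. { intros j _. rewrite Rabs_R0; lra. }
  set (G := fun k => a k * mono n k rho) in HG.
  set (S := msum n (fun k => Rabs (G k))).
  assert (HS : 0 <= S) by (apply (msum_dominated n G G 1); [lra | exact HG | intros; lra]).
  set (dl := Rmin 1 (e / (S + 1))).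
  assert (Hdl : 0 < dl <= 1)
    by (split; [apply Rmin_pos; [lra | apply Rdiv_lt_0_compat; lra] | apply Rmin_l]).
  assert (HdlS : dl * S < e).
  { assert (dl <= e / (S + 1)) by apply Rmin_r.
    assert (e / (S + 1) * S < e).
    { replace (e / (S + 1) * S) with (e - e / (S + 1)) by (field; lra).
      assert (0 < e / (S + 1)) by (apply Rdiv_lt_0_compat; lra). lra. }
    nra. }
  exists (dl * (r / 2)). split; [nra |].
  intros y Hy.
  set (h := fun j => y j - x j).
  destruct (Ha h) as [Hhs Hhe].
  { intros j Hj. unfold h. eapply Rlt_le_trans; [apply Hy, Hj | nra]. }
  replace (fun j => x j + h j) with y in Hhe
    by (apply functional_extensionality; intros; unfold h; ring).
  replace (fun j => x j + 0) with x in H0e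
    by (apply functional_extensionality; intros; ring).
  rewrite Hhe, H0e, <- msum_minus by assumption.
  destruct (msum_dominated n G (fun k => a k * mono n k h - a k * mono n k (fun _ => 0)) dl)
    as (_ & _ & H1 & H2); [lra | exact HG | |].
  - intros k. unfold G. rewrite <- Rmult_minus_distr_l, !Rabs_mult.
    rewrite (Rabs_pos_eq (mono n k rho)) by (apply mono_nonneg, Hrho).
    assert (Rabs (mono n k h - mono n k (fun _ => 0)) <= dl * mono n k rho).
    { apply Rabs_mono_sub_mono0_le; [lra | exact Hrho |].
      intros j Hj. left. apply Hy, Hj. }
    pose proof (Rabs_pos (a k)). nra.
  - eapply Rle_lt_trans; [exact H2 |]. eapply Rle_lt_trans; [exact H1 | exact HdlS].
Qed.

Definition continuous2 (f : R -> R -> R) : Prop := forall x y, continuity_2d_pt f x y.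

Lemma continuous2_analytic_comp n F (e : R -> R -> pt) : analytic n F ->
  (forall u v x y j, (j < n)%nat ->
     Rabs (e u v j - e x y j) <= Rmax (Rabs (u - x)) (Rabs (v - y))) ->
  continuous2 (fun u v => F (e u v)).
Proof.
  intros HF He x y eps.
  destruct (analytic_continuous n F HF (e x y) eps (cond_pos eps)) as (d & Hd & Hc).
  exists (mkposreal d Hd). intros u v Hu Hv. apply Hc.
  intros j Hj. eapply Rle_lt_trans; [apply He, Hj |]. now apply Rmax_lub_lt.
Qed.

Lemma continuous2_analytic2 f : analytic 2 (fun x => f (x O) (x 1%nat)) -> continuous2 f.
Proof.
  intros Hf. apply (continuous2_analytic_comp 2 _ pt2 Hf).
  intros u v x y [| [| j]] Hj; simpl; [apply Rmax_l | apply Rmax_r | lia].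
Qed.

Lemma continuous2_analytic4_slice w p1 p2 :
  analytic 4 (fun x => w (x O) (x 1%nat) (x 2%nat) (x 3%nat)) -> continuous2 (w p1 p2).
Proof.
  intros Hw. apply (continuous2_analytic_comp 4 _ (pt4 p1 p2) Hw).
  assert (H0 : forall u v x y, 0 <= Rmax (Rabs (u - x)) (Rabs (v - y)))
    by (intros; eapply Rle_trans; [apply Rabs_pos | apply Rmax_l]).
  intros u v x y [| [| [| [| j]]]] Hj; simpl;
    rewrite ?Rminus_eq_0, ?Rabs_R0; [apply H0 | apply H0 | apply Rmax_l | apply Rmax_r | lia].
Qed.

Lemma continuous_of_eps_delta (g : R -> R) x :
  (forall e, 0 < e -> exists d, 0 < d /\ forall y, Rabs (y - x) < d -> Rabs (g y - g x) < e) ->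
  continuous g x.
Proof.
  intros H. apply continuity_pt_filterlim.
  intros e He. destruct (H e He) as (d & Hd & Hy).
  exists d. split; [exact Hd |]. intros y [_ Hdy]. now apply Hy.
Qed.

Lemma continuous_slice f x y : continuity_2d_pt f x y -> continuous (fun v => f x v) y.
Proof.
  intros H. apply continuous_of_eps_delta. intros e He.
  destruct (H (mkposreal e He)) as [d Hd]. exists d. split; [apply cond_pos |].
  intros v Hv. apply Hd; [| exact Hv]. rewrite Rminus_eq_0, Rabs_R0. apply cond_pos.
Qed.

Section DoubleIntegral.

Variables a b : R.
Hypothesis Hab : a <= b.

Definition RInt2 (f : R -> R -> R) : R := RInt (fun u => RInt (fun v => f u v) a b) a b.

Lemma ex_RInt_slice f x : continuous2 f -> ex_RInt (fun v => f x v) a b.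
Proof.
  intros Hf. apply (@ex_RInt_continuous R_CompleteNormedModule).
  intros z _. apply continuous_slice, Hf.
Qed.

(* By uniform continuity of [f] on [[x-1, x+1] * [a, b]]. *)
Lemma continuous_RInt_slice f x : continuous2 f ->
  continuous (fun u => RInt (fun v => f u v) a b) x.
Proof.
  intros Hf. apply continuous_of_eps_delta. intros e He.
  assert (He' : 0 < e / (b - a + 1)) by (apply Rdiv_lt_0_compat; lra).
  destruct (uniform_continuity_2d f (x - 1) (x + 1) a b) with (eps := mkposreal _ He')
    as [d Hd]; [intros; apply Hf |].
  exists (Rmin d 1). split; [apply Rmin_pos; [apply cond_pos | lra] |].
  intros y Hy.
  assert (Hyd : Rabs (y - x) < d) by (eapply Rlt_le_trans; [exact Hy | apply Rmin_l]).
  assert (Hy1 : Rabs (y - x) < 1) by (eapply Rlt_le_trans; [exact Hy | apply Rmin_r]).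
  apply Rabs_def2 in Hy1.
  rewrite <- (RInt_minus (V := R_CompleteNormedModule)) by apply ex_RInt_slice, Hf.
  eapply Rle_lt_trans.
  - apply (abs_RInt_le_const _ a b (e / (b - a + 1))); [exact Hab | |].
    + apply (@ex_RInt_minus R_NormedModule); apply ex_RInt_slice, Hf.
    + intros t Ht. left. apply (Hd x t y t); try lra.
      rewrite Rminus_eq_0, Rabs_R0. apply cond_pos.
  - apply Rmult_lt_reg_r with (b - a + 1); [lra |].
    replace ((b - a) * (e / (b - a + 1)) * (b - a + 1)) with ((b - a) * e) by (field; lra).
    nra.
Qed.

Lemma ex_RInt_RInt_slice f : continuous2 f -> ex_RInt (fun u => RInt (fun v => f u v) a b) a b.
Proof.
  intros Hf. apply (@ex_RInt_continuous R_CompleteNormedModule).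
  intros z _. now apply continuous_RInt_slice.
Qed.

Lemma RInt2_le f g : continuous2 f -> continuous2 g -> (forall u v, f u v <= g u v) ->
  RInt2 f <= RInt2 g.
Proof.
  intros Hf Hg H. apply RInt_le; [exact Hab | now apply ex_RInt_RInt_slice .. |].
  intros u _. apply RInt_le; [exact Hab | now apply ex_RInt_slice .. |].
  intros; apply H.
Qed.

Lemma RInt2_minus f g : continuous2 f -> continuous2 g ->
  RInt2 (fun u v => f u v - g u v) = RInt2 f - RInt2 g.
Proof.
  intros Hf Hg. unfold RInt2.
  rewrite <- (RInt_minus (V := R_CompleteNormedModule)) by now apply ex_RInt_RInt_slice.
  apply RInt_ext. intros x _.
  exact (RInt_minus (V := R_CompleteNormedModule) _ _ a b
           (ex_RInt_slice f x Hf) (ex_RInt_slice g x Hg)).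
Qed.

Lemma RInt2_scal c f : continuous2 f -> RInt2 (fun u v => c * f u v) = c * RInt2 f.
Proof.
  intros Hf. unfold RInt2.
  rewrite <- (RInt_scal (V := R_CompleteNormedModule)) by now apply ex_RInt_RInt_slice.
  apply RInt_ext. intros x _.
  exact (RInt_scal (V := R_CompleteNormedModule) _ a b c (ex_RInt_slice f x Hf)).
Qed.

End DoubleIntegral.

Lemma RInt_gt_0_at (g : R -> R) a b c : a < b ->
  (forall x, a <= x <= b -> continuous g x) -> (forall x, a <= x <= b -> 0 <= g x) ->
  a <= c <= b -> 0 < g c -> 0 < RInt g a b.
Proof.
  intros Hab Hc Hnn Hcab Hgc.
  destruct (proj2 (continuity_pt_filterlim g c) (Hc c Hcab) (g c / 2) ltac:(lra))
    as (d & Hd & Hnear).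
  set (c1 := Rmax a (c - d / 2)). set (c2 := Rmin b (c + d / 2)).
  assert (a <= c1 <= c /\ c - d / 2 <= c1)
    by (unfold c1; split; [split; [apply Rmax_l | apply Rmax_lub; lra] | apply Rmax_r]).
  assert (c <= c2 <= b /\ c2 <= c + d / 2)
    by (unfold c2; split; [split; [apply Rmin_glb; lra | apply Rmin_l] | apply Rmin_r]).
  assert (c1 < c2) by (unfold c1, c2; apply Rmax_lub_lt; apply Rmin_glb_lt; lra).
  assert (Hex : forall u v, a <= u <= v -> v <= b -> ex_RInt g u v).
  { intros u v Hu Hv. apply (@ex_RInt_continuous R_CompleteNormedModule). intros z Hz.
    rewrite Rmin_left in Hz by lra. rewrite Rmax_right in Hz by lra. apply Hc. lra. }
  rewrite <- (RInt_Chasles g a c1 b), <- (RInt_Chasles g c1 c2 b) by (apply Hex; lra).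
  assert (0 <= RInt g a c1)
    by (apply RInt_ge_0; [lra | apply Hex; lra | intros; apply Hnn; lra]).
  assert (0 <= RInt g c2 b)
    by (apply RInt_ge_0; [lra | apply Hex; lra | intros; apply Hnn; lra]).
  assert (0 < RInt g c1 c2).
  { apply RInt_gt_0; [lra | | intros; apply Hc; lra].
    intros x Hx. destruct (Req_dec x c) as [-> | Hne]; [exact Hgc |].
    assert (Hgx : Rabs (g x - g c) < g c / 2).
    { apply Hnear. split; [split; [exact I | congruence] |].
      simpl. unfold R_dist. apply Rabs_def1; lra. }
    apply Rabs_def2 in Hgx. lra. }
  change (0 < RInt g a c1 + (RInt g c1 c2 + RInt g c2 b)). lra.
Qed.

Lemma RInt2_gt_0 a b f x y : a < b -> continuous2 f -> (forall u v, 0 <= f u v) ->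
  a <= x <= b -> a <= y <= b -> 0 < f x y -> 0 < RInt2 a b f.
Proof.
  intros Hab Hf Hnn Hx Hy Hpos.
  apply RInt_gt_0_at with x; [exact Hab | | | exact Hx |].
  - intros; apply continuous_RInt_slice; [lra | exact Hf].
  - intros; apply RInt_ge_0; [lra | now apply ex_RInt_slice | intros; apply Hnn].
  - apply RInt_gt_0_at with y; [exact Hab | | | exact Hy | exact Hpos].
    + intros; apply continuous_slice, Hf.
    + intros; apply Hnn.
Qed.

Lemma continuous2_sqr_div f D : continuous2 f -> continuous2 D -> (forall u v, 0 < D u v) ->
  continuous2 (fun u v => f u v ^ 2 / D u v).
Proof.
  intros Hf HD Hpos x y.
  apply continuity_2d_pt_ext with (f := fun u v => f u v * (f u v * 1) * / D u v);
    [reflexivity |].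
  apply continuity_2d_pt_mult.
  - apply continuity_2d_pt_mult; [apply Hf |].
    apply continuity_2d_pt_mult; [apply Hf | apply continuity_2d_pt_const].
  - apply continuity_2d_pt_inv; [apply HD | apply Rgt_not_eq, Hpos].
Qed.

Definition resolvent_integral a b (f W : R -> R -> R) (z : R) : R :=
  RInt2 a b (fun u v => f u v ^ 2 / (W u v - z)).

Section ResolventIntegral.

Variables (a b m : R) (f W : R -> R -> R).
Hypotheses (Hab : a < b) (Hf : continuous2 f) (HW : continuous2 W) (Hm : forall u v, m <= W u v).

Lemma continuous2_resolvent_integrand z : z < m ->
  continuous2 (fun u v => f u v ^ 2 / (W u v - z)).
Proof.
  intros Hz. apply continuous2_sqr_div; [exact Hf | | intros u v; specialize (Hm u v); lra].
  intros x y. apply continuity_2d_pt_minus; [apply HW | apply continuity_2d_pt_const].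
Qed.

(* The z-derivative of the integrand, [f^2 / (W - z)^2], is at least [f^2 / (W - m + 1)^2]
   for [z >= m - 1]. *)
Lemma resolvent_integral_increase x0 y0 : a <= x0 <= b -> a <= y0 <= b -> f x0 y0 <> 0 ->
  exists K, 0 < K /\ forall z1 z2, m - 1 <= z1 < z2 -> z2 < m ->
    (z2 - z1) * K <= resolvent_integral a b f W z2 - resolvent_integral a b f W z1.
Proof.
  intros Hx0 Hy0 Hf0.
  set (h := fun u v => f u v ^ 2 / ((W u v - (m - 1)) * (W u v - (m - 1)))).
  assert (Hh : continuous2 h).
  { apply continuous2_sqr_div; [exact Hf | | intros u v; specialize (Hm u v); nra].
    intros x y. apply continuity_2d_pt_mult;
      (apply continuity_2d_pt_minus; [apply HW | apply continuity_2d_pt_const]). }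
  exists (RInt2 a b h). split.
  - apply (RInt2_gt_0 a b h x0 y0); [exact Hab | exact Hh | | exact Hx0 | exact Hy0 |].
    + intros u v. specialize (Hm u v). unfold h. apply Rdiv_le_0_compat; [apply pow2_ge_0 | nra].
    + specialize (Hm x0 y0). unfold h. apply Rdiv_lt_0_compat; [| nra].
      rewrite <- Rsqr_pow2. now apply Rsqr_pos_lt.
  - intros z1 z2 Hz1 Hz2. unfold resolvent_integral.
    rewrite <- RInt2_scal, <- RInt2_minus
      by first [exact Hh | lra | apply continuous2_resolvent_integrand; lra].
    apply RInt2_le; [lra | | |].
    + intros x y. apply continuity_2d_pt_mult; [apply continuity_2d_pt_const | apply Hh].
    + intros x y. apply continuity_2d_pt_minus;
        apply continuous2_resolvent_integrand; lra.
    + intros u v. specialize (Hm u v). unfold h.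
      replace (f u v ^ 2 / (W u v - z2) - f u v ^ 2 / (W u v - z1))
        with ((z2 - z1) * (f u v ^ 2 / ((W u v - z2) * (W u v - z1)))) by (field; lra).
      apply Rmult_le_compat_l; [lra |].
      unfold Rdiv. apply Rmult_le_compat_l; [apply pow2_ge_0 |].
      apply Rinv_le_contravar; [nra |]. apply Rmult_le_compat; lra.
Qed.

End ResolventIntegral.

Lemma periodic_shift_Z (f : R -> R) P : (forall x, f (x + P) = f x) ->
  forall k x, f (x + P * IZR k) = f x.
Proof.
  intros Hper k. induction k as [| k IH | k IH] using Z.peano_ind; intros x.
  - now rewrite Rmult_0_r, Rplus_0_r.
  - rewrite succ_IZR, <- (IH x), <- (Hper (x + P * IZR k)). f_equal. ring.
  - rewrite <- (IH x), <- Z.sub_1_r, minus_IZR, <- (Hper (x + P * (IZR k - 1))). f_equal. ring.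
Qed.

Lemma exists_Z_shift_into_period P s : 0 < P -> exists k : Z, 0 <= s - P * IZR k <= P.
Proof.
  intros HP. destruct (archimed (s / P)) as [Hup1 Hup2].
  exists (up (s / P) - 1)%Z. rewrite minus_IZR.
  assert (E : s = P * (s / P)) by (field; lra).
  split.
  - assert (P * (IZR (up (s / P)) - 1) <= P * (s / P)) by (apply Rmult_le_compat_l; lra). lra.
  - assert (P * (s / P) <= P * IZR (up (s / P))) by (apply Rmult_le_compat_l; lra). lra.
Qed.

Lemma periodic2_nonzero_in_square phi : periodic2 phi -> (exists s1 s2, phi s1 s2 <> 0) ->
  exists s1 s2, 0 <= s1 <= 2 * PI /\ 0 <= s2 <= 2 * PI /\ phi s1 s2 <> 0.
Proof.
  intros Hper (s1 & s2 & Hs).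
  assert (HP : 0 < 2 * PI) by (pose proof PI_RGT_0; lra).
  destruct (exists_Z_shift_into_period _ s1 HP) as [k1 Hk1].
  destruct (exists_Z_shift_into_period _ s2 HP) as [k2 Hk2].
  exists (s1 - 2 * PI * IZR k1), (s2 - 2 * PI * IZR k2).
  split; [exact Hk1 |]. split; [exact Hk2 |].
  rewrite <- (periodic_shift_Z (fun x => phi x _) (2 * PI) (fun x => proj1 (Hper x _)) k1).
  rewrite <- (periodic_shift_Z (fun y => phi _ y) (2 * PI) (fun y => proj2 (Hper _ y)) k2).
  replace (s1 - 2 * PI * IZR k1 + 2 * PI * IZR k1) with s1 by ring.
  replace (s2 - 2 * PI * IZR k2 + 2 * PI * IZR k2) with s2 by ring.
  exact Hs.
Qed.

Lemma Rabs_ln_sqr_le v : 0 < v <= 1 -> Rabs (ln (v ^ 2)) <= 2 / v.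
Proof.
  intros Hv. rewrite ln_pow by lra. simpl INR.
  assert (Hln : ln v <= 0) by (rewrite <- ln_1; apply ln_le; lra).
  assert (Hinv : ln (/ v) < / v).
  { assert (0 < / v) by (apply Rinv_0_lt_compat; lra).
    rewrite <- (ln_exp (/ v)) at 2. apply ln_increasing; [lra |].
    pose proof (exp_ineq1 (/ v)). lra. }
  rewrite ln_Rinv in Hinv by lra.
  rewrite Rabs_left1 by lra. unfold Rdiv. lra.
Qed.

Lemma ex_series_bounded (a : nat -> R) :
  ex_series a -> exists B, 0 < B /\ forall n, Rabs (a n) <= B.
Proof.
  intros Hex. apply maj_by_pos. exists 0.
  apply is_lim_seq_Reals, ex_series_lim_0, Hex.
Qed.

Lemma Rabs_Series_le_geom (a : nat -> R) C : (forall n, Rabs (a n) <= C * (1 / 2) ^ n) ->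
  Rabs (Series a) <= 2 * C.
Proof.
  intros Ha.
  assert (Hgeom : is_series (fun n => (1 / 2) ^ n) 2).
  { pose proof (is_series_geom (1 / 2) ltac:(rewrite Rabs_pos_eq; lra)) as Hg.
    replace (/ (1 - 1 / 2)) with 2 in Hg by field. exact Hg. }
  assert (Hex : ex_series (fun n => C * (1 / 2) ^ n))
    by exact (ex_series_scal_l C _ (ex_intro _ 2 Hgeom)).
  eapply Rle_trans.
  { apply Series_Rabs. refine (ex_series_Rabs_le _ _ _ Hex).
    intros n. rewrite Rabs_Rabsolu. apply Ha. }
  eapply Rle_trans; [apply Series_le; [intros n; split; [apply Rabs_pos | apply Ha] | exact Hex] |].
  rewrite Series_scal_l, (is_series_unique (pow (1 / 2)) 2 Hgeom). lra.
Qed.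

(* Comparison with the geometric series at the ratio [t / t0 <= 1/2]. *)
Lemma Rabs_Series_pow_succ_le_sqr (b : nat -> R) t0 : 0 < t0 -> b O = 0 ->
  ex_series (fun n => b n * t0 ^ S n) ->
  exists B, 0 <= B /\ forall t, 0 < t <= t0 / 2 ->
    Rabs (Series (fun n => b n * t ^ S n)) <= B * t ^ 2.
Proof.
  intros Ht0 Hb0 Hex. destruct (ex_series_bounded _ Hex) as (B0 & HB0 & HB).
  exists (4 * B0 / t0 ^ 2). split.
  { apply Rdiv_le_0_compat; [lra | apply pow_lt; lra]. }
  intros t Ht. set (q := t / t0).
  assert (Hq : 0 < q <= 1 / 2).
  { unfold q. split; [apply Rdiv_lt_0_compat; lra |].
    apply Rmult_le_reg_r with t0; [lra |]. field_simplify; lra. }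
  replace (4 * B0 / t0 ^ 2 * t ^ 2) with (2 * (2 * B0 * q ^ 2)) by (unfold q; field; lra).
  apply Rabs_Series_le_geom. intros n.
  replace t with (t0 * q) by (unfold q; field; lra).
  rewrite Rpow_mult_distr, <- Rmult_assoc, Rabs_mult, (Rabs_pos_eq (q ^ S n))
    by (apply pow_le; lra).
  destruct n as [| n].
  - rewrite Hb0, !Rmult_0_l, Rabs_R0, Rmult_0_l. simpl. nra.
  - specialize (HB (S n)).
    assert (Hqn : q ^ n <= (1 / 2) ^ n) by (apply pow_incr; lra).
    assert (0 <= q ^ n) by (apply pow_le; lra).
    replace (q ^ S (S n)) with (q ^ 2 * q ^ n) by (simpl; ring).
    replace (2 * B0 * q ^ 2 * (1 / 2) ^ S n) with (B0 * (q ^ 2 * (1 / 2) ^ n)) by (simpl; field).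
    assert (0 <= q ^ 2) by (apply pow_le; lra).
    apply Rmult_le_compat; [apply Rabs_pos | nra | exact HB |].
    now apply Rmult_le_compat_l.
Qed.

Lemma log_series_remainder_le (a c : nat -> R) t0 : 0 < t0 -> a O = 0 -> c O = 0 ->
  ex_series (fun n => a n * t0 ^ S n) -> ex_series (fun n => c n * t0 ^ S n) ->
  exists M, 0 <= M /\ forall v, 0 < v <= 1 -> v ^ 2 <= t0 / 2 ->
    Rabs (ln (v ^ 2) * Series (fun n => a n * (v ^ 2) ^ S n)
          + Series (fun n => c n * (v ^ 2) ^ S n)) <= M * v ^ 3.
Proof.
  intros Ht0 Ha0 Hc0 Hexa Hexc.
  destruct (Rabs_Series_pow_succ_le_sqr a t0 Ht0 Ha0 Hexa) as (Ba & HBa & Ha).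
  destruct (Rabs_Series_pow_succ_le_sqr c t0 Ht0 Hc0 Hexc) as (Bc & HBc & Hc).
  exists (2 * Ba + Bc). split; [lra |]. intros v Hv Hv2.
  assert (Hv2pos : 0 < v ^ 2) by (apply pow_lt; lra).
  specialize (Ha (v ^ 2) ltac:(lra)). specialize (Hc (v ^ 2) ltac:(lra)).
  pose proof (Rabs_ln_sqr_le v Hv) as Hln.
  eapply Rle_trans; [apply Rabs_triang |]. rewrite Rabs_mult.
  assert (Hlog : Rabs (ln (v ^ 2)) * Rabs (Series (fun n => a n * (v ^ 2) ^ S n))
                 <= 2 * Ba * v ^ 3).
  { replace (2 * Ba * v ^ 3) with (2 / v * (Ba * (v ^ 2) ^ 2)) by (field; lra).
    apply Rmult_le_compat; try apply Rabs_pos; assumption. }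
  assert (Hpow : Bc * (v ^ 2) ^ 2 <= Bc * v ^ 3).
  { apply Rmult_le_compat_l; [lra |].
    replace ((v ^ 2) ^ 2) with (v * v ^ 3) by ring.
    assert (0 <= v ^ 3) by (apply pow_le; lra). nra. }
  lra.
Qed.

(* Compare [t1 = v^2] with [t2 = (v/2)^2]: the decrease is of order [v^2], the oscillation
   allowed by the flatness bound only of order [v^3]. *)
Lemma uniform_decrease_not_flat (F : R -> R) (L K M v0 : R) : 0 < K -> 0 <= M -> 0 < v0 ->
  (forall t1 t2, 0 < t2 < t1 -> t1 <= v0 ^ 2 -> (t1 - t2) * K <= F t2 - F t1) ->
  (forall v, 0 < v <= v0 -> Rabs (F (v ^ 2) - L) <= M * v ^ 3) -> False.
Proof.
  intros HK HM Hv0 Hdec Hflat.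
  set (v := Rmin v0 (K / (2 * M + 1))).
  assert (Hv : 0 < v <= v0)
    by (split; [apply Rmin_pos; [lra | apply Rdiv_lt_0_compat; lra] | apply Rmin_l]).
  assert (HvK : v * (2 * M + 1) <= K).
  { apply Rle_trans with (K / (2 * M + 1) * (2 * M + 1)); [| right; field; lra].
    apply Rmult_le_compat_r; [lra | apply Rmin_r]. }
  assert (Hv2 : 0 < v ^ 2) by (apply pow_lt; lra).
  assert (Hv2le : v ^ 2 <= v0 ^ 2) by (apply pow_incr; lra).
  pose proof (Hdec (v ^ 2) ((v / 2) ^ 2) ltac:(simpl; nra) Hv2le) as Hd.
  pose proof (Hflat v Hv) as H1. pose proof (Hflat (v / 2) ltac:(lra)) as H2.
  apply Rabs_le_between in H1. apply Rabs_le_between in H2.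
  assert (Hineq : 3 / 4 * K * v ^ 2 <= 9 / 8 * M * v * v ^ 2).
  { replace (3 / 4 * K * v ^ 2) with ((v ^ 2 - (v / 2) ^ 2) * K) by field.
    replace (9 / 8 * M * v * v ^ 2) with (M * (v / 2) ^ 3 + M * v ^ 3) by field.
    lra. }
  apply Rmult_le_reg_r in Hineq; [nra | exact Hv2].
Qed.

Theorem lemma3p4
  (phi : R -> R -> R) (w : R -> R -> R -> R -> R)
  (Hphi_per : periodic2 phi)
  (Hphi_an : analytic 2 (fun x => phi (x O) (x 1%nat)))
  (Hphi_nt : exists s1 s2, phi s1 s2 <> 0)
  (Hw_per : periodic4 w)
  (Hw_an : analytic 4 (fun x => w (x O) (x 1%nat) (x 2%nat) (x 3%nat)))
  (Hw_min : forall a b c d : R, ~ (eq2pi a 0 /\ eq2pi b 0 /\ eq2pi c 0 /\ eq2pi d 0) ->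
              w 0 0 0 0 < w a b c d)
  (Hw_nd : nondeg_hessian 4 (fun x => w (x O) (x 1%nat) (x 2%nat) (x 3%nat))
             (pt4 0 0 0 0)) :
  exists delta : R, 0 < delta /\
  forall p1 p2 q1 q2 : R,
    Rabs p1 < delta -> Rabs p2 < delta ->
    unique_nondeg_min_wp w p1 p2 q1 q2 ->
    phi q1 q2 = 0 ->
    let m := w p1 p2 q1 q2 in
    let mup := / Omega phi w p1 p2 m in
    forall (alpha c : nat -> R) (eps : R), 0 < eps ->
      (forall mu z, 0 < mu -> 0 < m - z < eps ->
         ex_series (fun n => alpha (S n) * (m - z) ^ (S n)) /\
         ex_series (fun n => c (S n) * (m - z) ^ (S n)) /\
         DeltaF phi w mu p1 p2 z =
           1 - mu / mup
             - mu * ln (m - z) * Series (fun n => alpha (S n) * (m - z) ^ (S n))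
             - mu * Series (fun n => c (S n) * (m - z) ^ (S n))) ->
      Rabs (alpha 1%nat) + Rabs (c 1%nat) <> 0.
Proof.
  exists 1. split; [lra |].
  intros p1 p2 q1 q2 _ _ [Hmin _] _ m mup alpha c eps Heps Hexp Habs.
  destruct (Rplus_eq_0 _ _ (Rabs_pos _) (Rabs_pos _) Habs) as [Ha1%Rabs_eq_0 Hc1%Rabs_eq_0].
  destruct (periodic2_nonzero_in_square phi Hphi_per Hphi_nt) as (s1 & s2 & Hs1 & Hs2 & Hs).
  destruct (resolvent_integral_increase 0 (2 * PI) m phi (w p1 p2)
              (Rmult_lt_0_compat _ _ Rlt_0_2 PI_RGT_0) (continuous2_analytic2 phi Hphi_an)
              (continuous2_analytic4_slice w p1 p2 Hw_an) Hmin s1 s2 Hs1 Hs2 Hs) as (K & HK & Hinc).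
  assert (Hexp1 : forall t, 0 < t < eps ->
    ex_series (fun n => alpha (S n) * t ^ S n) /\ ex_series (fun n => c (S n) * t ^ S n) /\
    resolvent_integral 0 (2 * PI) phi (w p1 p2) (m - t) - / mup =
      ln t * Series (fun n => alpha (S n) * t ^ S n) + Series (fun n => c (S n) * t ^ S n)).
  { intros t Ht. destruct (Hexp 1 (m - t) Rlt_0_1) as (Ea & Ec & E); [lra |].
    replace (m - (m - t)) with t in Ea, Ec, E by ring.
    split; [exact Ea |]. split; [exact Ec |].
    unfold DeltaF, Rdiv in E.
    change (Omega phi w p1 p2) with (resolvent_integral 0 (2 * PI) phi (w p1 p2)) in E. lra. }
  destruct (Hexp1 (eps / 2) ltac:(lra)) as (Exa & Exc & _).
  destruct (log_series_remainder_le (fun n => alpha (S n)) (fun n => c (S n)) (eps / 2)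
              ltac:(lra) Ha1 Hc1 Exa Exc) as (M & HM & Hrem).
  set (v0 := Rmin 1 (eps / 4)).
  assert (Hv0 : 0 < v0 <= 1 /\ v0 <= eps / 4)
    by (split; [split; [apply Rmin_pos; lra | apply Rmin_l] | apply Rmin_r]).
  apply (uniform_decrease_not_flat
           (fun t => resolvent_integral 0 (2 * PI) phi (w p1 p2) (m - t)) (/ mup) K M v0);
    [exact HK | exact HM | lra | |].
  - intros t1 t2 Ht Ht1.
    replace (t1 - t2) with ((m - t2) - (m - t1)) by ring.
    apply Hinc; [simpl in Ht1; nra | lra].
  - intros v Hv. assert (Hv2 : 0 < v ^ 2 <= v) by (simpl; nra).
    destruct (Hexp1 (v ^ 2) ltac:(lra)) as (_ & _ & ->).
    apply Hrem; lra.
Qed.
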